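(* Let $\mathcal{H}$ be a real Hilbert space of dimension $d>1$, $G>0$, $\mathcal{G}=\{g\in\mathcal{H}:\|g\|\le G\}$, $\theta\in\mathcal{H}$ fixed, and $h:\mathbb{R}\to\mathbb{R}$ an even convex function that is increasing on $[0,\infty)$. Then \[ \min_{w\in\mathcal{H}}\max_{g\in\mathcal{G}}\ \langle w,g\rangle+h(\|\theta-g\|)\ \ge\ h\Big(\sqrt{\|\theta\|^2+G^2}\Big). \] *)

(* the finite-dimensional real Hilbert space of dimension d
   is modelled (up to isometric isomorphism) as row vectors 'rV[R]_d with the
   standard inner product, over an arbitrary realType R. *)
From mathcomp Require Import all_boot all_order all_algebra.
From mathcomp Require Import reals.
Set Implicit Arguments. Unset Strict Implicit. Unset Printing Implicit Defensive.
Import Order.TTheory GRing.Theory Num.Theory.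
Local Open Scope ring_scope.

Definition dotv (R : comRingType) (d : nat) (u v : 'rV[R]_d) : R :=
  (u *m v^T) 0 0.

Definition normv (R : rcfType) (d : nat) (u : 'rV[R]_d) : R :=
  Num.sqrt (dotv u u).

Definition convex_fun (R : realFieldType) (h : R -> R) : Prop :=
  forall (x y t : R), 0 <= t -> t <= 1 ->
    h (t * x + (1 - t) * y) <= t * h x + (1 - t) * h y.

Definition even_fun (R : ringType) (h : R -> R) : Prop :=
  forall x, h (- x) = h x.

Definition incr_on_nonneg (R : realDomainType) (h : R -> R) : Prop :=
  forall x y, 0 <= x -> x <= y -> h x <= h y.

From mathcomp Require Import all_boot all_order all_algebra.
From mathcomp Require Import reals.
From mathcomp Require Import ring.
Set Implicit Arguments. Unset Strict Implicit. Unset Printing Implicit Defensive.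
Import Order.TTheory GRing.Theory Num.Theory.
Local Open Scope ring_scope.

(* Since d > 1 there is a direction u orthogonal to theta; choosing g on the
   line through u with norm G and the sign that makes <w, g> >= 0, Pythagoras
   gives ||theta - g|| = sqrt (||theta||^2 + G^2) exactly. *)

Section DotProduct.
Variables (R : comNzRingType) (d : nat).
Implicit Types (a : R) (u v x : 'rV[R]_d).

Lemma dotvE u v : dotv u v = \sum_i u 0 i * v 0 i.
Proof. by rewrite /dotv !mxE; apply: eq_bigr => i _; rewrite mxE. Qed.

Lemma dotvC u v : dotv u v = dotv v u.
Proof. by rewrite !dotvE; apply: eq_bigr => i _; rewrite mulrC. Qed.

Lemma dotvDl u v x : dotv (u + v) x = dotv u x + dotv v x.
Proof. by rewrite /dotv mulmxDl mxE. Qed.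

Lemma dotvZl a u x : dotv (a *: u) x = a * dotv u x.
Proof. by rewrite /dotv -scalemxAl mxE. Qed.

Lemma dotvDr u v x : dotv x (u + v) = dotv x u + dotv x v.
Proof. by rewrite dotvC dotvDl !(dotvC x). Qed.

Lemma dotvZr a u x : dotv x (a *: u) = a * dotv x u.
Proof. by rewrite dotvC dotvZl (dotvC x). Qed.

Lemma dotv_delta_mx i u : dotv (delta_mx 0 i) u = u 0 i.
Proof. by rewrite /dotv -rowE !mxE. Qed.

End DotProduct.

Section EuclideanNorm.
Variables (R : rcfType) (d : nat).
Implicit Types (a : R) (u v : 'rV[R]_d).

Lemma dotvv_ge0 u : 0 <= dotv u u.
Proof. by rewrite dotvE; apply: sumr_ge0 => i _; rewrite -expr2 sqr_ge0. Qed.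

Lemma dotvv_ge_sqr u i : u 0 i ^+ 2 <= dotv u u.
Proof.
rewrite dotvE (bigD1 i) //= expr2 lerDl.
by apply: sumr_ge0 => j _; rewrite -expr2 sqr_ge0.
Qed.

Lemma sqr_normv u : normv u ^+ 2 = dotv u u.
Proof. by rewrite sqr_sqrtr // dotvv_ge0. Qed.

Lemma normvZ a u : normv (a *: u) = `|a| * normv u.
Proof. by rewrite /normv dotvZl dotvZr mulrA -expr2 sqrtrM ?sqr_ge0 ?sqrtr_sqr. Qed.

Lemma normvN u : normv (- u) = normv u.
Proof. by rewrite -scaleN1r normvZ normrN1 mul1r. Qed.

Lemma normv_gt0_coord u i : u 0 i != 0 -> 0 < normv u.
Proof.
move=> ui_neq0; rewrite sqrtr_gt0.
by apply: lt_le_trans (dotvv_ge_sqr u i); rewrite exprn_even_gt0.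
Qed.

Lemma normvB_orthogonal u v :
  dotv u v = 0 -> normv (v - u) = Num.sqrt (normv v ^+ 2 + normv u ^+ 2).
Proof.
move=> uv0; rewrite !sqr_normv /normv -scaleN1r dotvDl !dotvDr !dotvZl !dotvZr.
by rewrite (dotvC v u) uv0; congr Num.sqrt; ring.
Qed.

Lemma exists_orthogonal (hd : (1 < d)%N) v :
  exists2 u : 'rV[R]_d, dotv u v = 0 & 0 < normv u.
Proof.
pose i0 : 'I_d := Ordinal (ltnW hd); pose i1 : 'I_d := Ordinal hd.
have [v0_eq0|v0_neq0] := eqVneq (v 0 i0) 0.
  exists (delta_mx 0 i0); first by rewrite dotv_delta_mx v0_eq0.
  by apply: (normv_gt0_coord (i := i0)); rewrite mxE !eqxx oner_neq0.
exists (v 0 i1 *: delta_mx 0 i0 - v 0 i0 *: delta_mx 0 i1).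
  by rewrite -scaleNr dotvDl !dotvZl !dotv_delta_mx; ring.
apply: (normv_gt0_coord (i := i1)).
by rewrite !mxE !eqxx /= mulr0 mulr1 sub0r oppr_eq0.
Qed.

Lemma exists_orthogonal_sphere_point (hd : (1 < d)%N) (G : R) v w :
  0 <= G -> exists g : 'rV[R]_d,
    [/\ normv g = G, dotv g v = 0 & 0 <= dotv w g].
Proof.
move=> G_ge0; have [u uv0 u_gt0] := exists_orthogonal hd v.
pose c := G / normv u.
have c_ge0 : 0 <= c by rewrite divr_ge0 // ltW.
have normv_cu : normv (c *: u) = G.
  by rewrite normvZ ger0_norm // mulfVK // gt_eqF.
have [wu_ge0|wu_lt0] := lerP 0 (dotv w u).
  by exists (c *: u); rewrite normv_cu dotvZl dotvZr uv0 mulr0 mulr_ge0.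
exists (- (c *: u)); rewrite normvN normv_cu -scaleNr dotvZl dotvZr uv0 mulr0.
by split=> //; rewrite mulNr -mulrN mulr_ge0 // oppr_ge0 ltW.
Qed.

End EuclideanNorm.

Theorem lemma13 (R : realType) (d : nat) (hd : (1 < d)%N)
  (G : R) (hG : 0 < G) (theta : 'rV[R]_d) (h : R -> R)
  (h_even : even_fun h) (h_convex : convex_fun h) (h_incr : incr_on_nonneg h) :
  forall w : 'rV[R]_d,
    exists2 g : 'rV[R]_d, normv g <= G &
      h (Num.sqrt (normv theta ^+ 2 + G ^+ 2)) <= dotv w g + h (normv (theta - g)).
Proof.
move=> w.
have [g [normv_g g_theta0 wg_ge0]] :=
  exists_orthogonal_sphere_point hd theta w (ltW hG).
exists g; first by rewrite normv_g.
by rewrite normvB_orthogonal // normv_g lerDr.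
Qed.
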